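(* Let $(\Theta,\mathbf{Q},\leq)$ be a $\Theta$-projective system of size $t$ in an artin triangulated $R$-category $\mathcal{T}$, with triangles $K(i)\to Q(i)\xrightarrow{\beta_i}\Theta(i)\to K(i)[1]$. Then: (a) for each $i\in[1,t]$, $\beta_i:Q(i)\to\Theta(i)$ is a $\mathcal{P}(\Theta)$-cover of $\Theta(i)$; (b) if $(\Theta,\mathbf{Q}',\leq)$ is another $\Theta$-projective system of size $t$ in $\mathcal{T}$ with maps $\beta'_i:Q'(i)\to\Theta(i)$, then for each $i$ there is an isomorphism $\rho_i:Q(i)\to Q'(i)$ with $\beta'_i\rho_i=\beta_i$.
   Context: Artin triangulated $R$-category: triangulated, $R$ commutative artinian, Hom-sets finitely generated $R$-modules, $R$-bilinear composition, $R$-linear shift, Krull–Schmidt. $\mathfrak{F}(\mathcal{X})$: objects $M$ admitting distinguished triangles $M_{k-1}\to M_k\to X_k\to M_{k-1}[1]$ ($k=0,\dots,n$), $M_{-1}=0=X_0$, $M_n=M$, $X_k\in\mathcal{X}$ for $k\ge1$. A $\Theta$-projective system of size $t$: $\le$ a linear order on $[1,t]$; $\Theta(i)$ non-zero with $\mathrm{Hom}(\Theta(j),\Theta(i))=0$ for $j>i$; $Q(i)$ indecomposable with $Q=\bigoplus Q(i)$ satisfying $\mathrm{Hom}(Q,\Theta(j)[\pm1])=0$ for all $j$; for each $i$ a distinguished triangle $K(i)\to Q(i)\xrightarrow{\beta_i}\Theta(i)\to K(i)[1]$ with $K(i)\in\mathfrak{F}(\{\Theta(j):j>i\})$, $\mathrm{Hom}(K(i)[1],\Theta(i))=0$.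 $\mathcal{P}(\Theta)=\{X:\mathrm{Hom}(X,L[1])=0\ \forall L\in\mathfrak{F}(\Theta)\}$. A $\mathcal{P}(\Theta)$-cover of $C$ is a morphism $f:X\to C$ with $X\in\mathcal{P}(\Theta)$ such that every morphism $X'\to C$ with $X'\in\mathcal{P}(\Theta)$ factors through $f$, and $f$ is right minimal (any $g:X\to X$ with $fg=f$ is an isomorphism). *)

From HB Require Import structures.
From mathcomp Require Import all_boot all_order all_algebra.

Set Implicit Arguments.
Unset Strict Implicit.
Unset Printing Implicit Defensive.

Import Order.TTheory GRing.Theory.
Local Open Scope ring_scope.

Record TriCat (R : comPzRingType) := {
  Ob : Type;
  THom : Ob -> Ob -> lmodType R;
  tcomp : forall X Y Z : Ob, THom Y Z -> THom X Y -> THom X Z;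
  idm : forall X : Ob, THom X X;
  sh : Ob -> Ob;
  shinv : Ob -> Ob;
  shm : forall X Y : Ob, THom X Y -> THom (sh X) (sh Y);
  dist : forall X Y Z : Ob, THom X Y -> THom Y Z -> THom Z (sh X) -> Prop
}.

Arguments Ob {R}.
Arguments THom {R} t.
Arguments tcomp {R t X Y Z}.
Arguments idm {R t}.
Arguments sh {R t}.
Arguments shinv {R t}.
Arguments shm {R t X Y}.
Arguments dist {R t X Y Z}.

Section Notions.
Variables (R : comPzRingType) (T : TriCat R).
Local Notation Ob := (Ob T).
Local Notation THom := (THom T).
Local Notation idm := (@idm R T).
Local Notation sh := (@sh R T).
Local Notation shinv := (@shinv R T).

Definition is_iso (X Y : Ob) (f : THom X Y) : Prop :=
  exists g : THom Y X, tcomp g f = idm X /\ tcomp f g = idm Y.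

Definition is_zero (X : Ob) : Prop := idm X = 0.

Definition homzero (X Y : Ob) : Prop := forall f : THom X Y, f = 0.

Definition is_dsum2 (A B S : Ob) : Prop :=
  exists (i1 : THom A S) (i2 : THom B S) (p1 : THom S A) (p2 : THom S B),
    [/\ tcomp p1 i1 = idm A, tcomp p2 i2 = idm B, tcomp p1 i2 = 0,
        tcomp p2 i1 = 0 & tcomp i1 p1 + tcomp i2 p2 = idm S].

Definition is_dsum (n : nat) (A : 'I_n -> Ob) (S : Ob) : Prop :=
  exists (i : forall k, THom (A k) S) (p : forall k, THom S (A k)),
    [/\ forall k, tcomp (p k) (i k) = idm (A k),
        forall k l, k != l -> tcomp (p k) (i l) = 0
      & \sum_(k < n) tcomp (i k) (p k) = idm S].

Definition local_end (X : Ob) : Prop :=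
  ~ is_zero X /\ forall f : THom X X, is_iso f \/ is_iso (idm X - f).

Definition indecomposable (X : Ob) : Prop :=
  ~ is_zero X /\ forall A B, is_dsum2 A B X -> is_zero A \/ is_zero B.

Definition is_ideal (I : R -> Prop) : Prop :=
  [/\ I 0, forall x y, I x -> I y -> I (x + y) & forall r x, I x -> I (r * x)].

Definition artinian_ring : Prop :=
  forall I : nat -> R -> Prop, (forall n, is_ideal (I n)) ->
    (forall n x, I n.+1 x -> I n x) ->
    exists N, forall n, (N <= n)%N -> forall x, I n x <-> I N x.

Definition fin_gen_homs : Prop :=
  forall X Y : Ob, exists s : seq (THom X Y),
    forall f : THom X Y, exists c : 'I_(size s) -> R,
      f = \sum_(k < size s) c k *: s`_k.

Definition artin_triangulated : Prop :=
  [/\ [/\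
   [/\ forall X Y Z W (f : THom Z W) (g : THom Y Z) (h : THom X Y),
         tcomp f (tcomp g h) = tcomp (tcomp f g) h,
       forall X Y (f : THom X Y), tcomp (idm Y) f = f
     & forall X Y (f : THom X Y), tcomp f (idm X) = f],
   [/\ forall X Y Z (a : R) (f g : THom Y Z) (h : THom X Y),
         tcomp (a *: f + g) h = a *: tcomp f h + tcomp g h
     & forall X Y Z (a : R) (f : THom Y Z) (g h : THom X Y),
         tcomp f (a *: g + h) = a *: tcomp f g + tcomp f h],
   [/\ exists Z : Ob, is_zero Z
     & forall A B : Ob, exists S, is_dsum2 A B S],
   [/\ (forall X Y Z (f : THom Y Z) (g : THom X Y),
         shm (tcomp f g) = tcomp (shm f) (shm g)),
       (forall X, shm (idm X) = idm (sh X)),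
       (forall X Y (a : R) (f g : THom X Y), shm (a *: f + g) = a *: shm f + shm g),
       ((forall X, sh (shinv X) = X) /\ (forall X, shinv (sh X) = X))
     & (forall X Y, bijective (@shm R T X Y))]
   &
   [/\ forall X Y Z X' Y' Z' (f : THom X Y) (g : THom Y Z) (h : THom Z (sh X))
          (f' : THom X' Y') (g' : THom Y' Z') (h' : THom Z' (sh X'))
          (a : THom X X') (b : THom Y Y') (c : THom Z Z'),
         dist f g h -> is_iso a -> is_iso b -> is_iso c ->
         tcomp f' a = tcomp b f -> tcomp g' b = tcomp c g ->
         tcomp h' c = tcomp (shm a) h -> dist f' g' h',
       forall X Z, is_zero Z -> dist (idm X) (0 : THom X Z) (0 : THom Z (sh X))
     & forall X Y (f : THom X Y), exists Z (g : THom Y Z) (h : THom Z (sh X)),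
         dist f g h]],
   (forall X Y Z (f : THom X Y) (g : THom Y Z) (h : THom Z (sh X)),
       dist f g h <-> dist g h (- shm f)),
   (forall X Y Z X' Y' Z' (f : THom X Y) (g : THom Y Z) (h : THom Z (sh X))
          (f' : THom X' Y') (g' : THom Y' Z') (h' : THom Z' (sh X'))
          (a : THom X X') (b : THom Y Y'),
       dist f g h -> dist f' g' h' -> tcomp f' a = tcomp b f ->
       exists c : THom Z Z', tcomp g' b = tcomp c g /\ tcomp h' c = tcomp (shm a) h),
   (forall X Y Z Z' X' Y' (f : THom X Y) (g : THom Y Z)
          (i : THom Y Z') (i' : THom Z' (sh X))
          (k : THom Z X') (k' : THom X' (sh Y))
          (j : THom Z Y') (j' : THom Y' (sh X)),
       dist f i i' -> dist g k k' -> dist (tcomp g f) j j' ->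
       exists (u : THom Z' Y') (v : THom Y' X'),
         [/\ dist u v (tcomp (shm i) k'), tcomp u i = tcomp j g,
             tcomp j' u = i', tcomp v j = k & tcomp (shm f) j' = tcomp k' v])
 & [/\ artinian_ring, fin_gen_homs
     &
       forall X : Ob, exists n (A : 'I_n -> Ob),
         (forall k, local_end (A k)) /\ is_dsum A X]].

(* The subcategory F(C): objects with a finite filtration by triangles
   M_{k-1} -> M_k -> X_k -> M_{k-1}[1], k = 0..n, M_{-1} = 0 = X_0, M_n = M,
   X_k in C for k >= 1.  Here N k stands for M_{k-1}. *)
Definition inF (C : Ob -> Prop) (M : Ob) : Prop :=
  exists (n : nat) (N X : nat -> Ob) (u : forall k, THom (N k) (N k.+1))
         (v : forall k, THom (N k.+1) (X k)) (w : forall k, THom (X k) (sh (N k))),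
    [/\ is_zero (N 0%N), is_zero (X 0%N), N n.+1 = M,
        forall k, (1 <= k <= n)%N -> C (X k)
      & forall k, (k <= n)%N -> dist (u k) (v k) (w k)].

Definition theta_class (t : nat) (Theta : 'I_t -> Ob) (P : 'I_t -> bool)
  (X : Ob) : Prop := exists j, P j /\ X = Theta j.

Definition linear_order (t : nat) (le : rel 'I_t) : Prop :=
  [/\ reflexive le, antisymmetric le, transitive le & total le].

(* j > i in the order le *)
Definition gtr (t : nat) (le : rel 'I_t) (i j : 'I_t) : bool :=
  le i j && (i != j).

Definition theta_proj_system (t : nat) (le : rel 'I_t) (Theta Q : 'I_t -> Ob)
  (beta : forall i, THom (Q i) (Theta i)) : Prop :=
  [/\ linear_order le,
      (forall i, ~ is_zero (Theta i)) /\
        (forall i j, gtr le i j -> homzero (Theta j) (Theta i)),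
      (forall i, indecomposable (Q i)),
      (exists S, is_dsum Q S /\
        forall j, homzero S (sh (Theta j)) /\ homzero S (shinv (Theta j)))
    & forall i, exists (K : Ob) (u : THom K (Q i)) (w : THom (Theta i) (sh K)),
        [/\ dist u (beta i) w,
            inF (theta_class Theta (gtr le i)) K
          & homzero (sh K) (Theta i)]].

Definition inP (t : nat) (Theta : 'I_t -> Ob) (X : Ob) : Prop :=
  forall L, inF (theta_class Theta predT) L -> homzero X (sh L).

Definition is_cover (P : Ob -> Prop) (X C : Ob) (f : THom X C) : Prop :=
  [/\ P X,
      forall X' (g : THom X' C), P X' -> exists h : THom X' X, tcomp f h = g
    & forall g : THom X X, tcomp f g = f -> is_iso g].

End Notions.
Arguments theta_proj_system {R T t} le Theta Q beta.

From mathcomp Require Import all_boot all_order all_algebra.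
From Stdlib Require Import Classical ClassicalEpsilon.

(* Since Q(i) is a summand of a Q with Hom(Q, Theta[1]) = 0, the filtrations of
   objects of F(Theta) give Q(i) in P(Theta).  The factorisation property of
   beta_i follows by applying Hom(X', -) to the triangle of beta_i, because
   K(i) lies in F(Theta).  For right minimality, End(Q(i)) is local by
   Krull--Schmidt, so an endomorphism g with beta_i g = beta_i that is not
   invertible would make 1 - g invertible and force beta_i = 0; then Theta(i)
   would be a summand of K(i)[1], against Hom(K(i)[1], Theta(i)) = 0.  Part (b)
   is the uniqueness of covers up to isomorphism. *)

Set Implicit Arguments.
Unset Strict Implicit.
Unset Printing Implicit Defensive.
Import GRing.Theory.

Section ArtinTriangulated.
Local Open Scope ring_scope.
Variables (R : comPzRingType) (T : TriCat R).
Hypothesis HT : artin_triangulated T.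
Local Notation Ob := (Ob T).
Local Notation Hom := (THom T).
Local Notation idT := (@idm R T).
Local Notation "f <o g" := (tcomp f g) (at level 40, left associativity).

Lemma compA X Y Z W (f : Hom Z W) (g : Hom Y Z) (h : Hom X Y) :
  f <o (g <o h) = f <o g <o h.
Proof. by case: HT => [[[a _ _] _ _ _ _] _ _ _ _]; apply: a. Qed.

Lemma comp1l X Y (f : Hom X Y) : idT Y <o f = f.
Proof. by case: HT => [[[_ a _] _ _ _ _] _ _ _ _]; apply: a. Qed.

Lemma comp1r X Y (f : Hom X Y) : f <o idT X = f.
Proof. by case: HT => [[[_ _ a] _ _ _ _] _ _ _ _]; apply: a. Qed.

Lemma compDl X Y Z (f g : Hom Y Z) (h : Hom X Y) : (f + g) <o h = f <o h + g <o h.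
Proof.
case: HT => [[_ [a _] _ _ _] _ _ _ _].
by have := a _ _ _ 1 f g h; rewrite !scale1r.
Qed.

Lemma compDr X Y Z (f : Hom Y Z) (g h : Hom X Y) : f <o (g + h) = f <o g + f <o h.
Proof.
case: HT => [[_ [_ a] _ _ _] _ _ _ _].
by have := a _ _ _ 1 f g h; rewrite !scale1r.
Qed.

Lemma comp0l X Y Z (h : Hom X Y) : (0 : Hom Y Z) <o h = 0.
Proof. by apply: (@addrI _ ((0 : Hom Y Z) <o h)); rewrite -compDl !addr0. Qed.

Lemma comp0r X Y Z (f : Hom Y Z) : f <o (0 : Hom X Y) = 0.
Proof. by apply: (@addrI _ (f <o (0 : Hom X Y))); rewrite -compDr !addr0. Qed.

Lemma compNl X Y Z (f : Hom Y Z) (h : Hom X Y) : (- f) <o h = - (f <o h).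
Proof. by apply/eqP; rewrite -addr_eq0 -compDl addNr comp0l. Qed.

Lemma compNr X Y Z (f : Hom Y Z) (h : Hom X Y) : f <o (- h) = - (f <o h).
Proof. by apply/eqP; rewrite -addr_eq0 -compDr addNr comp0r. Qed.

Lemma compBl X Y Z (f g : Hom Y Z) (h : Hom X Y) : (f - g) <o h = f <o h - g <o h.
Proof. by rewrite compDl compNl. Qed.

Lemma compBr X Y Z (f : Hom Y Z) (g h : Hom X Y) : f <o (g - h) = f <o g - f <o h.
Proof. by rewrite compDr compNr. Qed.

Lemma comp_suml X Y Z I (r : seq I) (P : pred I) (F : I -> Hom Y Z) (h : Hom X Y) :
  (\sum_(k <- r | P k) F k) <o h = \sum_(k <- r | P k) (F k <o h).
Proof. by elim/big_rec2: _ => [|k a b _ <-]; rewrite ?comp0l ?compDl. Qed.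

Lemma comp_sumr X Y Z I (r : seq I) (P : pred I) (f : Hom Y Z) (F : I -> Hom X Y) :
  f <o (\sum_(k <- r | P k) F k) = \sum_(k <- r | P k) (f <o F k).
Proof. by elim/big_rec2: _ => [|k a b _ <-]; rewrite ?comp0r ?compDr. Qed.

Lemma shm_comp X Y Z (f : Hom Y Z) (g : Hom X Y) : shm (f <o g) = shm f <o shm g.
Proof. by case: HT => [[_ _ _ [a _ _ _ _] _] _ _ _ _]; apply: a. Qed.

Lemma shm_idm X : shm (idT X) = idT (sh X).
Proof. by case: HT => [[_ _ _ [_ a _ _ _] _] _ _ _ _]; apply: a. Qed.

Lemma shmD X Y (f g : Hom X Y) : shm (f + g) = shm f + shm g.
Proof.
case: HT => [[_ _ _ [_ _ a _ _] _] _ _ _ _].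
by have := a _ _ 1 f g; rewrite !scale1r.
Qed.

Lemma shm0 X Y : shm (0 : Hom X Y) = 0.
Proof. by apply: (@addrI _ (shm (0 : Hom X Y))); rewrite -shmD !addr0. Qed.

Lemma shm_bij X Y : bijective (@shm R T X Y).
Proof. by case: HT => [[_ _ _ [_ _ _ _ a] _] _ _ _ _]; apply: a. Qed.

Lemma shm_inj X Y : injective (@shm R T X Y).
Proof. exact: bij_inj (shm_bij X Y). Qed.

Lemma shm_surj X Y (c : Hom (sh X) (sh Y)) : exists b, shm b = c.
Proof. by case: (shm_bij X Y) => g _ gK; exists (g c); rewrite gK. Qed.

Lemma dist_rot X Y Z (f : Hom X Y) (g : Hom Y Z) (h : Hom Z (sh X)) :
  dist f g h <-> dist g h (- shm f).
Proof. by case: HT => [_ a _ _ _]; apply: a. Qed.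

Lemma dist_rot3 X Y Z (f : Hom X Y) (g : Hom Y Z) (h : Hom Z (sh X)) :
  dist f g h -> dist (- shm f) (- shm g) (- shm h).
Proof. by move/dist_rot/dist_rot/dist_rot. Qed.

Lemma dist_morph X Y Z X' Y' Z' (f : Hom X Y) (g : Hom Y Z) (h : Hom Z (sh X))
    (f' : Hom X' Y') (g' : Hom Y' Z') (h' : Hom Z' (sh X'))
    (a : Hom X X') (b : Hom Y Y') :
  dist f g h -> dist f' g' h' -> f' <o a = b <o f ->
  exists c : Hom Z Z', g' <o b = c <o g /\ h' <o c = shm a <o h.
Proof. by case: HT => [_ _ H _ _]; apply: H. Qed.

Lemma dist_idm_zero X Z : is_zero Z -> dist (idT X) (0 : Hom X Z) (0 : Hom Z (sh X)).
Proof. by case: HT => [[_ _ _ _ [_ a _]] _ _ _ _]; apply: a. Qed.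

Lemma zero_obj_exists : exists Z : Ob, is_zero Z.
Proof. by case: HT => [[_ _ [a _] _ _] _ _ _ _]. Qed.

Lemma dsum2_exists (A B : Ob) : exists S, is_dsum2 A B S.
Proof. by case: HT => [[_ _ [_ a] _ _] _ _ _ _]. Qed.

Lemma krull_schmidt (X : Ob) :
  exists n (A : 'I_n -> Ob), (forall k, local_end (A k)) /\ is_dsum A X.
Proof. by case: HT => [_ _ _ _ [_ _ a]]. Qed.

Lemma hom_to_zero X Z (f : Hom X Z) : is_zero Z -> f = 0.
Proof. by move=> z; rewrite -[f]comp1l z comp0l. Qed.

Lemma hom_from_zero X Z (f : Hom Z X) : is_zero Z -> f = 0.
Proof. by move=> z; rewrite -[f]comp1r z comp0r. Qed.

Lemma is_zero_sh (Z : Ob) : is_zero Z -> is_zero (sh Z).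
Proof. by move=> z; rewrite /is_zero -shm_idm z shm0. Qed.

(* Both lemmas compare the triangle with a trivial one through TR3. *)
Lemma dist_lift X Y Z (f : Hom X Y) (g : Hom Y Z) (h : Hom Z (sh X)) :
  dist f g h -> forall W (a : Hom W Y), g <o a = 0 -> exists b, f <o b = a.
Proof.
move=> /dist_rot D W a ga; have [Z0 z0] := zero_obj_exists.
have /dist_rot D0 := dist_idm_zero W z0.
have E : g <o a = (0 : Hom Z0 Z) <o (0 : Hom W Z0) by rewrite ga comp0l.
have [c [_]] := dist_morph D0 D E.
have [b <-] := shm_surj c.
rewrite compNl compNr shm_idm comp1r -shm_comp => /oppr_inj/shm_inj <-.
by exists b.
Qed.

Lemma dist_extend X Y Z (f : Hom X Y) (g : Hom Y Z) (h : Hom Z (sh X)) :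
  dist f g h -> forall W (a : Hom Y W), a <o f = 0 -> exists c, c <o g = a.
Proof.
move=> D W a af; have [Z0 z0] := zero_obj_exists.
have D0 : dist (0 : Hom Z0 W) (idT W) (0 : Hom W (sh Z0)).
  by apply/dist_rot; rewrite shm0 oppr0; apply/dist_idm_zero/is_zero_sh.
have E : (0 : Hom Z0 W) <o (0 : Hom X Z0) = a <o f by rewrite af comp0l.
have [c [Hc _]] := dist_morph D D0 E.
by exists c; rewrite -Hc comp1l.
Qed.

Lemma inF_sub (C C' : Ob -> Prop) L :
  (forall X, C X -> C' X) -> inF C L -> inF C' L.
Proof.
move=> CC [n [N [X [u [v [w [N0 X0 Nn CX D]]]]]]].
by exists n, N, X, u, v, w; split=> // k /CX /CC.
Qed.

Lemma homzero_sh_inF (Y : Ob) (C : Ob -> Prop) :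
  (forall X, C X -> homzero Y (sh X)) -> forall L, inF C L -> homzero Y (sh L).
Proof.
move=> HC L [n [N [X [u [v [w [N0 X0 <- CX D]]]]]]].
suff H k : (k <= n.+1)%N -> homzero Y (sh (N k)) by apply: H.
elim: k => [_ a|k IH lt_kn]; first exact/hom_to_zero/is_zero_sh.
have hX : homzero Y (sh (X k)).
  case: k {IH} lt_kn => [|k] lt_kn b; first exact/hom_to_zero/is_zero_sh.
  by apply: HC; apply: CX.
move=> a; have [b <-] := dist_lift (dist_rot3 (D k lt_kn)) (hX (- shm (v k) <o a)).
by rewrite (IH (ltnW lt_kn) b) comp0r.
Qed.

Lemma dsum_of_split_idempotents n (A : 'I_n -> Ob) S (E : 'I_n -> Hom S S) :
  (forall k, exists ip : Hom (A k) S * Hom S (A k),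
     ip.2 <o ip.1 = idT (A k) /\ ip.1 <o ip.2 = E k) ->
  (forall k l, k != l -> E k <o E l = 0) -> \sum_k E k = idT S -> is_dsum A S.
Proof.
move=> split_E EE sumE.
pose ip k := proj1_sig (constructive_indefinite_description _ (split_E k)).
have ipE k : (ip k).2 <o (ip k).1 = idT (A k) /\ (ip k).1 <o (ip k).2 = E k :=
  proj2_sig (constructive_indefinite_description _ (split_E k)).
exists (fun k => (ip k).1), (fun k => (ip k).2); split.
- by move=> k; case: (ipE k).
- move=> k l kl; have [pik ek] := ipE k; have [pil el] := ipE l.
  have -> : (ip k).2 <o (ip l).1 = (ip k).2 <o E k <o E l <o (ip l).1.
    by rewrite -ek -el !compA pik comp1l -compA pil comp1r.
  by rewrite -(compA _ (E k)) EE // comp0r comp0l.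
- by rewrite -sumE; apply: eq_bigr => k _; case: (ipE k).
Qed.

Lemma dsum_exists n (A : 'I_n -> Ob) : exists S, is_dsum A S.
Proof.
elim: n A => [|n IH] A.
  have [Z z] := zero_obj_exists.
  by exists Z, (fun k => 0), (fun k => 0); split=> [[]|[]|]; rewrite // big_ord0.
have [S' [i' [p' [pi' pk' sum']]]] := IH (fun l => A (lift ord0 l)).
have [S [i1 [i2 [p1 [p2 [e11 e22 e12 e21 es]]]]]] := dsum2_exists (A ord0) S'.
pose E (k : 'I_n.+1) : Hom S S :=
  if unlift ord0 k is Some l then i2 <o (i' l <o p' l) <o p2 else i1 <o p1.
exists S; apply: (@dsum_of_split_idempotents _ _ _ E).
- move=> k; case: (unliftP ord0 k) => [l ->|->]; last first.
    by exists (i1, p1); rewrite /E unlift_none.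
  exists (i2 <o i' l, p' l <o p2); rewrite /E liftK !compA; split=> //=.
  by rewrite -(compA _ p2) e22 comp1r pi'.
- move=> k l; case: (unliftP ord0 k) => [k' ->|->];
    case: (unliftP ord0 l) => [l' ->|->] //; rewrite /E ?liftK ?unlift_none => kl.
  + rewrite !compA -(compA _ p2 i2) e22 comp1r -(compA _ (p' k')) pk' //.
    by rewrite comp0r !comp0l.
  + by rewrite !compA -(compA _ p2 i1) e21 comp0r !comp0l.
  + by rewrite !compA -(compA _ p1 i2) e12 comp0r !comp0l.
- rewrite big_ord_recl -es /E unlift_none; congr (_ + _).
  under eq_bigr do rewrite liftK.
  by rewrite -comp_suml -comp_sumr sum' comp1r.
Qed.

Lemma dsum_split n (A : 'I_n -> Ob) Q k S' :
  is_dsum A Q -> is_dsum (fun l : 'I_n.-1 => A (lift k l)) S' ->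
  is_dsum2 (A k) S' Q.
Proof.
move=> [i [p [pi pk sumQ]]] [i' [p' [pi' pk' sumS']]].
pose i2 : Hom S' Q := \sum_(l < n.-1) i (lift k l) <o p' l.
pose p2 : Hom Q S' := \sum_(l < n.-1) i' l <o p (lift k l).
exists (i k), i2, (p k), p2; split=> //.
- rewrite comp_suml -sumS'; apply: eq_bigr => l _.
  rewrite comp_sumr (bigD1 l) //= big1 ?addr0.
    by rewrite !compA -(compA _ (p _)) pi comp1r.
  move=> j jl; rewrite !compA -(compA _ (p _)) pk ?comp0r ?comp0l //.
  by rewrite (inj_eq (@lift_inj _ k)) eq_sym.
- rewrite comp_sumr big1 // => l _.
  by rewrite compA pk ?comp0l // neq_lift.
- rewrite comp_suml big1 // => l _.
  by rewrite -compA pk ?comp0r // eq_sym neq_lift.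
- rewrite -sumQ (bigD1_ord k) //=; congr (_ + _).
  rewrite comp_suml; apply: eq_bigr => l _.
  rewrite comp_sumr (bigD1 l) //= big1 ?addr0.
    by rewrite !compA -(compA _ (p' l)) pi' comp1r.
  move=> j jl; rewrite !compA -(compA _ (p' l)) pk' ?comp0r ?comp0l //.
  by rewrite eq_sym.
Qed.

Lemma dsum_nonzero_summand n (A : 'I_n -> Ob) S :
  ~ is_zero S -> is_dsum A S -> exists k, ~ is_zero (A k).
Proof.
move=> nzS [i [p [_ _ sumS]]]; apply: NNPP => allz; apply: nzS.
rewrite /is_zero -sumS big1 // => k _.
have zk : is_zero (A k) by apply: NNPP => nzk; apply: allz; exists k.
by rewrite (hom_from_zero (i k) zk) comp0l.
Qed.

Lemma local_end_transfer A Q (i : Hom A Q) (p : Hom Q A) :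
  p <o i = idT A -> i <o p = idT Q -> local_end A -> local_end Q.
Proof.
move=> pi ip [nzA locA].
have conj_iso h : is_iso h -> is_iso (i <o h <o p).
  move=> [h' [h'h hh']]; exists (i <o h' <o p).
  rewrite !compA -!(compA _ p i) pi !comp1r.
  by rewrite -(compA _ h') h'h -(compA _ h) hh' comp1r.
split=> [zQ|f]; first by apply: nzA; rewrite /is_zero -pi -[i]comp1l zQ comp0l comp0r.
have fE : f = i <o (p <o f <o i) <o p by rewrite !compA ip comp1l -compA ip comp1r.
have gE : idT Q - f = i <o (idT A - (p <o f <o i)) <o p.
  by rewrite compBr compBl comp1r ip -fE.
by case: (locA (p <o f <o i)) => /conj_iso; rewrite -?fE -?gE; [left|right].
Qed.

Lemma indecomposable_local_end (Q : Ob) : indecomposable Q -> local_end Q.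
Proof.
move=> [nzQ indQ]; have [n [A [locA dsA]]] := krull_schmidt Q.
have [k nzAk] := dsum_nonzero_summand nzQ dsA.
have [S' dsS'] := dsum_exists (fun l => A (lift k l)).
have ds2 := dsum_split dsA dsS'.
have [i1 [i2 [p1 [p2 [e11 _ _ _ es]]]]] := ds2.
case: (indQ _ _ ds2) => // zS'.
apply: (local_end_transfer e11 _ (locA k)).
by rewrite -es (hom_from_zero i2 zS') comp0l addr0.
Qed.

Lemma local_end_right_minimal X Y (f : Hom X Y) (g : Hom X X) :
  local_end X -> f <> 0 -> f <o g = f -> is_iso g.
Proof.
move=> [_ locX] nzf fg; case: (locX g) => [//|[h [_ gh]]].
exfalso; apply: nzf.
by rewrite -[f]comp1r -gh compA compBr comp1r fg subrr comp0l.
Qed.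

Lemma dist_snd_neq0 K Q Th (u : Hom K Q) (b : Hom Q Th) (w : Hom Th (sh K)) :
  dist u b w -> homzero (sh K) Th -> ~ is_zero Th -> b <> 0.
Proof.
move=> /dist_rot D hK nzTh b0; apply: nzTh.
have idb : idT Th <o b = 0 by rewrite b0 comp0r.
have [c cw] := dist_extend D idb.
by rewrite /is_zero -cw (hK c) comp0l.
Qed.

Lemma summand_inP t (Theta : 'I_t -> Ob) n (A : 'I_n -> Ob) S k :
  is_dsum A S -> (forall j, homzero S (sh (Theta j))) -> inP Theta (A k).
Proof.
move=> [i [p [pi _ _]]] hS L /homzero_sh_inF; apply => _ [j [_ ->]] a.
by rewrite -[a]comp1r -pi compA (hS j (a <o p k)) comp0l.
Qed.

Lemma proj_system_cover t (le : rel 'I_t) (Theta Q : 'I_t -> Ob)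
    (beta : forall i, Hom (Q i) (Theta i)) :
  theta_proj_system le Theta Q beta -> forall i, is_cover (inP Theta) (beta i).
Proof.
move=> [_ [nzTh _] indQ [S [dsQ hS]] tri] i.
have [K [u [w [D FK hK]]]] := tri i.
have /dist_rot D' := D.
split=> [|X' g PX'|g].
- exact: summand_inP dsQ (fun j => proj1 (hS j)).
- apply: (dist_lift D').
  by apply: PX'; apply: inF_sub FK => _ [j [_ ->]]; exists j.
- apply: local_end_right_minimal; first exact: indecomposable_local_end.
  exact: dist_snd_neq0 D hK (nzTh i).
Qed.

Lemma cover_unique (P : Ob -> Prop) X X' C (f : Hom X C) (f' : Hom X' C) :
  is_cover P f -> is_cover P f' -> exists rho : Hom X X', is_iso rho /\ f' <o rho = f.
Proof.
move=> [PX covf minf] [PX' covf' minf'].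
have [h fh] := covf' X f PX; have [h' fh'] := covf X' f' PX'.
have [x [xhh _]] : is_iso (h' <o h) by apply: minf; rewrite compA fh' fh.
have [y [_ hhy]] : is_iso (h <o h') by apply: minf'; rewrite compA fh fh'.
(* [h] has the left inverse [x <o h'] and the right inverse [h' <o y]. *)
have left_right : x <o h' = h' <o y.
  by rewrite -[x <o h']comp1r -hhy !compA -(compA x) xhh comp1l.
exists h; split=> //; exists (x <o h'); split; first by rewrite -compA.
by rewrite left_right compA hhy.
Qed.

End ArtinTriangulated.

Theorem proposition5p6 (R : comPzRingType) (T : TriCat R)
  (HT : artin_triangulated T) (t : nat) (le : rel 'I_t)
  (Theta Q : 'I_t -> Ob T) (beta : forall i, THom T (Q i) (Theta i)) :
  theta_proj_system le Theta Q beta ->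
  (forall i, is_cover (inP Theta) (beta i)) /\
  (forall (Q' : 'I_t -> Ob T) (beta' : forall i, THom T (Q' i) (Theta i)),
     theta_proj_system le Theta Q' beta' ->
     forall i, exists rho : THom T (Q i) (Q' i),
       is_iso rho /\ tcomp (beta' i) rho = beta i).
Proof.
move=> sys; split; first exact (proj_system_cover HT sys).
move=> Q' beta' sys' i.
exact (cover_unique HT (proj_system_cover HT sys i) (proj_system_cover HT sys' i)).
Qed.
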